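(* Over $R=\mathbb{F}_2$ with $F=\hat{\mathbb{G}}_a$ and $G=\hat{\mathbb{G}}_m$, let $i\ne j$. In order for the class $c\,a_ia_j$ (with coefficient $c$) to extend to a multiplicative cocycle, it is necessary that $c^2=0$.
   Context: $\hat{\mathbb{G}}_a$ is the formal group law $x+y$ and $\hat{\mathbb{G}}_m$ is $x+y+xy$. The Lubin–Tate cohomology $H^*(F;G)(R)$ is the cohomology of the complex of power series $F^{\times n}\to G$ with the alternating coboundary built from the group laws. Filtering by leading total degree gives the tangent spectral sequence $H^*(\hat{\mathbb{G}}_a;\hat{\mathbb{G}}_a)(R)\Rightarrow H^*(\hat{\mathbb{G}}_a;\hat{\mathbb{G}}_m)(R)$; ''extending to a multiplicative cocycle'' means being the leading (lowest-degree homogeneous) additive part of a multiplicative cocycle, i.e. surviving this spectral sequence. Over $\mathbb{F}_2$, $a_i\in H^1(\hat{\mathbb{G}}_a;\hat{\mathbb{G}}_a)$ is the class of $x^{2^i}$ and $a_ia_j\in H^2$ is the class of $x^{2^i}y^{2^j}$. *)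

(* Power series over F_2 are represented by their coefficient
   functions: ps1 = one variable, ps2 = two variables (x,y), ps3 = three (x,y,z). *)
From mathcomp Require Import all_boot all_order all_algebra.
Set Implicit Arguments. Unset Strict Implicit. Unset Printing Implicit Defensive.
Import GRing.Theory.
Local Open Scope ring_scope.

Definition ps1 := nat -> 'F_2.
Definition ps2 := nat -> nat -> 'F_2.
Definition ps3 := nat -> nat -> nat -> 'F_2.

(* Substitutions of the additive formal group law into a 2-variable series f:
   f(y,z), f(x+y,z), f(x,y+z), f(x,y), as 3-variable series. *)
Definition sub_y_z (f : ps2) : ps3 := fun a b c => if a == 0%N then f b c else 0.
Definition sub_xpy_z (f : ps2) : ps3 :=
  fun a b c => ('C(a + b, a))%:R * f (a + b)%N c.
Definition sub_x_ypz (f : ps2) : ps3 :=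
  fun a b c => ('C(b + c, b))%:R * f a (b + c)%N.
Definition sub_x_y (f : ps2) : ps3 := fun a b c => if c == 0%N then f a b else 0.

Definition mul3 (p q : ps3) : ps3 := fun a b c =>
  \sum_(a1 < a.+1) \sum_(b1 < b.+1) \sum_(c1 < c.+1)
     p a1 b1 c1 * q (a - a1)%N (b - b1)%N (c - c1)%N.

Definition gm_add3 (p q : ps3) : ps3 := fun a b c => p a b c + q a b c + mul3 p q a b c.

(* P is a 2-cocycle in C^*(Ga; Gm): the alternating coboundary
   P(y,z) -_m P(x+y,z) +_m P(x,y+z) -_m P(x,y) vanishes, i.e.
   P(y,z) +_m P(x,y+z) = P(x+y,z) +_m P(x,y). *)
Definition mult_cocycle2 (P : ps2) : Prop :=
  forall a b c, gm_add3 (sub_y_z P) (sub_x_ypz P) a b c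
              = gm_add3 (sub_xpy_z P) (sub_x_y P) a b c.

Definition add_cobound1 (g : ps1) : ps2 := fun a b =>
  (if a == 0%N then g b else 0) - ('C(a + b, a))%:R * g (a + b)%N
  + (if b == 0%N then g a else 0).

Definition mono2 (c : 'F_2) (m n : nat) : ps2 :=
  fun a b => if (a == m) && (b == n) then c else 0.

(* c a_i a_j extends to a multiplicative cocycle: there is a multiplicative
   2-cocycle P whose terms of total degree <= d := 2^i + 2^j are exactly a
   representative  c x^(2^i) y^(2^j) + delta_add(g)  (g homogeneous of degree d)
   of the class c a_i a_j in H^2(Ga;Ga). *)
Definition extends_to_mult_cocycle (c : 'F_2) (i j : nat) : Prop :=
  exists P : ps2, mult_cocycle2 P /\
    exists g : ps1, (forall k, k != (2 ^ i + 2 ^ j)%N -> g k = 0) /\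
      forall a b, (a + b <= 2 ^ i + 2 ^ j)%N ->
        P a b = mono2 c (2 ^ i) (2 ^ j) a b + add_cobound1 g a b.

(* Suppose c = 1 and write u = 2^i, v = 2^j.  Over F_2 the additive coboundary
   of x^(u+v) is x^u y^v + x^v y^u, so the multiplicative cocycle P starts with
   x^u y^v or with x^v y^u; the two cases differ only by exchanging u and v.
   In degree 2(u+v) the cocycle condition says that the additive coboundary of
   P equals the product term x^u y^u z^(2v) + x^(2u) y^v z^v.  The functional
   f |-> f(2u,v,v) + f(v,2u,v) + f(v,v,2u) vanishes on additive coboundaries,
   because C(2v,v) is even, but is 1 on the product term. *)

From mathcomp Require Import all_boot all_order all_algebra.
From mathcomp Require Import zify ring.
Import GRing.Theory.
Local Open Scope ring_scope.

Lemma F2_cases (x : 'F_2) : x = 0 \/ x = 1.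
Proof. by case: x => [[|[|n]] // lt_x2]; [left | right]; apply: val_inj. Qed.

Lemma pchar2_F2 : 2 \in [pchar 'F_2].
Proof. exact: pchar_Fp. Qed.

Lemma F2_addrr (x : 'F_2) : x + x = 0.
Proof. exact: (addrr_pchar2 pchar2_F2). Qed.

Lemma F2_eq_sub_mul2 (x y z : 'F_2) : x - y = 2%:R * z -> x = y.
Proof. by rewrite pchar_Fp_0 // mul0r => /eqP; rewrite subr_eq0 => /eqP. Qed.

Lemma F2_addr_cancel (x y A B C : 'F_2) : x + (A + B) = y + (C + A) -> x + y = B + C.
Proof.
move=> h; apply: (@F2_eq_sub_mul2 _ _ (y - B)).
by rewrite -[x](addrK (A + B)) h; ring.
Qed.

Lemma coef_XD1n (R : nzRingType) n k : (('X + 1 : {poly R}) ^+ n)`_k = 'C(n, k)%:R.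
Proof.
rewrite exprD1n (_ : \sum_(i < n.+1) _ = \poly_(i < n.+1) 'C(n, i)%:R); last first.
  by rewrite poly_def; apply: eq_bigr => i _; rewrite scaler_nat.
by rewrite coef_poly ltnS; case: leqP => // /bin_small ->.
Qed.

Lemma XD1_exp2_F2 e : ('X + 1 : {poly 'F_2}) ^+ (2 ^ e) = 'X^(2 ^ e) + 1.
Proof.
rewrite exprDn_pchar ?expr1n //.
have pchar2 : 2 \in [pchar {poly 'F_2}] by rewrite pchar_poly pchar2_F2.
by rewrite (eq_pnat _ (pcharf_eq pchar2)) pnatX pnat_id.
Qed.

(* [(x + y)^w = x^w + y^w] over [F_2]. *)
Definition additive_exponent (w : nat) : Prop :=
  forall k, 'C(w, k)%:R = (k == w)%N%:R + (k == 0)%N%:R :> 'F_2.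

Lemma additive_exponent_gt0 {w : nat} : additive_exponent w -> (0 < w)%N.
Proof. by move/(_ 0%N); rewrite bin0 eqxx eq_sym lt0n; case: (w == 0%N). Qed.

Lemma additive_exponent_pow2 e : additive_exponent (2 ^ e).
Proof. by move=> k; rewrite -coef_XD1n XD1_exp2_F2 coefD coefXn coef1. Qed.

Lemma bin_pow2D_F2 i j k :
  'C(2 ^ i + 2 ^ j, k)%:R =
    (k == 2 ^ i + 2 ^ j)%N%:R + (k == 2 ^ i)%N%:R + (k == 2 ^ j)%N%:R + (k == 0)%N%:R
  :> 'F_2.
Proof.
rewrite -coef_XD1n exprD !XD1_exp2_F2 mulrDl !mulrDr !mul1r mulr1 -exprD.
by rewrite !coefD !coefXn coef1 !addrA.
Qed.

Lemma bin_addC m n : 'C(m + n, m) = 'C(m + n, n).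
Proof. by rewrite -(bin_sub (leq_addl m n)) addnK. Qed.

Lemma bin_double_F2 n : (0 < n)%N -> 'C(n + n, n)%:R = 0 :> 'F_2.
Proof. by case: n => // n _; rewrite addSn binS bin_addC natrD F2_addrr. Qed.

Definition mono3 (m n k : nat) : ps3 :=
  fun a b c => ((a == m) && (b == n) && (c == k))%:R.

Definition add3 (p q : ps3) : ps3 := fun a b c => p a b c + q a b c.

Definition eq2_upto (d : nat) (P Q : ps2) : Prop :=
  forall a b, (a + b <= d)%N -> P a b = Q a b.

Definition eq3_upto (d : nat) (p q : ps3) : Prop :=
  forall a b c, (a + b + c <= d)%N -> p a b c = q a b c.

Definition homog3 (d : nat) (p : ps3) : Prop :=
  forall a b c, (a + b + c != d)%N -> p a b c = 0.

Lemma homog3_mono3 d m n k : (m + n + k = d)%N -> homog3 d (mono3 m n k).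
Proof.
by move=> deg a b c; rewrite -deg /mono3 => ne; rewrite (_ : _ && _ = false) //; lia.
Qed.

Lemma homog3_add3 d p q : homog3 d p -> homog3 d q -> homog3 d (add3 p q).
Proof. by move=> hp hq a b c ne; rewrite /add3 hp ?hq ?addr0. Qed.

Lemma big_if_const (R : nmodType) n (b : bool) (F : 'I_n -> R) :
  \sum_(i < n) (if b then F i else 0) = if b then \sum_(i < n) F i else 0.
Proof. by case: b; rewrite ?big1_eq. Qed.

Lemma mul3Dl p1 p2 q a b c :
  mul3 (add3 p1 p2) q a b c = mul3 p1 q a b c + mul3 p2 q a b c.
Proof.
rewrite /mul3 -big_split; apply: eq_bigr => a1 _.
rewrite -big_split; apply: eq_bigr => b1 _.
by rewrite -big_split; apply: eq_bigr => c1 _; rewrite mulrDl.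
Qed.

Lemma mul3Dr p q1 q2 a b c :
  mul3 p (add3 q1 q2) a b c = mul3 p q1 a b c + mul3 p q2 a b c.
Proof.
rewrite /mul3 -big_split; apply: eq_bigr => a1 _.
rewrite -big_split; apply: eq_bigr => b1 _.
by rewrite -big_split; apply: eq_bigr => c1 _; rewrite mulrDr.
Qed.

Lemma mul3_mono3l m n k q a b c :
  mul3 (mono3 m n k) q a b c =
  if [&& (m <= a)%N, (n <= b)%N & (k <= c)%N]
  then q (a - m)%N (b - n)%N (c - k)%N else 0.
Proof.
have ifE (x y z : bool) (X : 'F_2) :
  (x && y && z)%:R * X = if x then if y then if z then X else 0 else 0 else 0.
  by case: x; case: y; case: z; rewrite ?mul1r ?mul0r.
rewrite /mul3 /mono3.
under eq_bigr => a1 _ do under eq_bigr => b1 _ do under eq_bigr => c1 _ do rewrite ifE.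
under eq_bigr => a1 _ do under eq_bigr => b1 _ do rewrite !big_if_const -big_mkcond
  (big_ord1_eq _ (fun c1 => q (a - a1)%N (b - b1)%N (c - c1)%N)).
under eq_bigr => a1 _ do rewrite !big_if_const -big_mkcond
  (big_ord1_eq _ (fun b1 => if (k < c.+1)%N then q (a - a1)%N (b - b1)%N (c - k)%N else 0)).
rewrite -big_mkcond (big_ord1_eq _ (fun a1 => if (n < b.+1)%N then
  if (k < c.+1)%N then q (a - a1)%N (b - n)%N (c - k)%N else 0 else 0)) !ltnS.
by case: (m <= a)%N; case: (n <= b)%N; case: (k <= c)%N.
Qed.

Lemma mul3_mono3 m n k m' n' k' a b c :
  mul3 (mono3 m n k) (mono3 m' n' k') a b c = mono3 (m + m') (n + n') (k + k') a b c.
Proof.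
rewrite mul3_mono3l /mono3; case: ifP => h; last by rewrite (_ : _ && _ = false) //; lia.
by do 2 apply: congr1; lia.
Qed.

Lemma mul3_lowest {d e : nat} {p p' q q' : ps3} {a b c : nat} :
  eq3_upto d p p' -> eq3_upto e q q' -> homog3 d p' -> homog3 e q' ->
  (a + b + c = d + e)%N -> mul3 p q a b c = mul3 p' q' a b c.
Proof.
move=> pp' qq' hp' hq' deg; rewrite /mul3.
apply: eq_bigr => a1 _; apply: eq_bigr => b1 _; apply: eq_bigr => c1 _.
have := ltn_ord a1; have := ltn_ord b1; have := ltn_ord c1; rewrite !ltnS => c1c b1b a1a.
case: (ltngtP (a1 + b1 + c1) d) => deg1.
- by rewrite pp' ?hp' ?mul0r //; lia.
- by rewrite qq' ?hq' ?mulr0 //; lia.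
- by rewrite pp' ?qq' //; lia.
Qed.

Lemma mult_cocycle2_interior {P : ps2} {a c : nat} (b : nat) :
  mult_cocycle2 P -> (0 < a)%N -> (0 < c)%N ->
  'C(b + c, b)%:R * P a (b + c)%N + mul3 (sub_y_z P) (sub_x_ypz P) a b c =
  'C(a + b, a)%:R * P (a + b)%N c + mul3 (sub_xpy_z P) (sub_x_y P) a b c.
Proof.
move=> cocP a_gt0 c_gt0; have := cocP a b c.
by rewrite /gm_add3 {1}/sub_y_z {1}/sub_x_y (gtn_eqF a_gt0) (gtn_eqF c_gt0) add0r addr0.
Qed.

Section LeadingMonomial.

Variables (u v : nat) (P : ps2).
Hypotheses (bin_u : additive_exponent u) (bin_v : additive_exponent v).
Hypothesis lowP : eq2_upto (u + v) P (mono2 1 u v).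

Lemma sub_y_z_lowest : eq3_upto (u + v) (sub_y_z P) (mono3 0 u v).
Proof.
move=> a b c deg; rewrite /sub_y_z /mono3; case: eqP => [a0 | //].
by rewrite lowP /mono2; [case: (_ && _) | lia].
Qed.

Lemma sub_x_y_lowest : eq3_upto (u + v) (sub_x_y P) (mono3 u v 0).
Proof.
move=> a b c deg; rewrite /sub_x_y /mono3; case: eqP => [c0 | _]; last by rewrite andbF.
rewrite lowP /mono2 ?andbT; [by case: (_ && _) | lia].
Qed.

Lemma sub_x_ypz_lowest :
  eq3_upto (u + v) (sub_x_ypz P) (add3 (mono3 u v 0) (mono3 u 0 v)).
Proof.
move=> a b c deg; rewrite /sub_x_ypz lowP; last by lia.
rewrite /mono2 /add3 /mono3; case: (a =P u) => [_ | _] /=; last by rewrite mulr0 addr0.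
case: (b + c =P v)%N => [bc | bc]; last first.
  have -> : (b == v) && (c == 0%N) = false by lia.
  have -> : (b == 0%N) && (c == v) = false by lia.
  by rewrite mulr0 addr0.
rewrite mulr1 bc bin_v.
have -> : (c == 0%N) = (b == v) by lia.
have -> : (c == v) = (b == 0%N) by lia.
by rewrite !andbb.
Qed.

Lemma sub_xpy_z_lowest :
  eq3_upto (u + v) (sub_xpy_z P) (add3 (mono3 u 0 v) (mono3 0 u v)).
Proof.
move=> a b c deg; rewrite /sub_xpy_z lowP; last by lia.
rewrite /mono2 /add3 /mono3; case: (c =P v) => [_ | _]; last by rewrite !andbF mulr0 addr0.
rewrite !andbT; case: (a + b =P u)%N => [ab | ab]; last first.
  have -> : (a == u) && (b == 0%N) = false by lia.
  have -> : (a == 0%N) && (b == u) = false by lia.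
  by rewrite mulr0 addr0.
rewrite mulr1 ab bin_u.
have -> : (b == 0%N) = (a == u) by lia.
have -> : (b == u) = (a == 0%N) by lia.
by rewrite !andbb.
Qed.

(* For a, c > 0 the left side is the coefficient of x^a y^b z^c in the additive
   coboundary of P, the right side that of P(y,z) P(x,y+z) + P(x+y,z) P(x,y). *)
Lemma mult_cocycle2_top_degree a b c : mult_cocycle2 P ->
  (0 < a)%N -> (0 < c)%N -> (a + b + c = (u + v) + (u + v))%N ->
  'C(b + c, b)%:R * P a (b + c)%N + 'C(a + b, a)%:R * P (a + b)%N c =
  mono3 u u (v + v) a b c + mono3 (u + u) v v a b c.
Proof.
move=> cocP a_gt0 c_gt0 deg.
have hom m n k : (m + n + k = u + v)%N -> homog3 (u + v) (mono3 m n k).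
  exact: homog3_mono3.
have := mult_cocycle2_interior b cocP a_gt0 c_gt0.
rewrite (mul3_lowest sub_y_z_lowest sub_x_ypz_lowest _ _ deg); first last.
- by apply: homog3_add3; apply: hom; lia.
- by apply: hom; lia.
rewrite (mul3_lowest sub_xpy_z_lowest sub_x_y_lowest _ _ deg); first last.
- by apply: hom; lia.
- by apply: homog3_add3; apply: hom; lia.
by rewrite mul3Dr mul3Dl !mul3_mono3 !add0n !addn0; apply: F2_addr_cancel.
Qed.

Lemma leading_monomial_not_mult_cocycle2 : u != v -> ~ mult_cocycle2 P.
Proof.
move=> uv cocP.
have u_gt0 := additive_exponent_gt0 bin_u; have v_gt0 := additive_exponent_gt0 bin_v.
have e1 := mult_cocycle2_top_degree (u + u)%N v v cocP ltac:(lia) v_gt0 ltac:(lia).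
have e2 := mult_cocycle2_top_degree v (u + u)%N v cocP v_gt0 v_gt0 ltac:(lia).
have e3 := mult_cocycle2_top_degree v v (u + u)%N cocP v_gt0 ltac:(lia) ltac:(lia).
move: e1 e2 e3; rewrite bin_double_F2 // !mul0r (addnC v (u + u)%N).
rewrite -(bin_addC (u + u)%N) /mono3.
have -> : (u + u == u)%N = false by lia.
have -> : (v == u) = false by lia.
have -> : (v == v + v)%N = false by lia.
have -> : (u + u == v)%N = (v == u + u)%N by lia.
rewrite !eqxx !andbF /= !andbT !andbb !add0r addr0 => e1 + e3.
by rewrite e1 e3 => /eqP; rewrite -subr_eq0 addrAC subrr add0r oner_eq0.
Qed.

End LeadingMonomial.

Lemma pow2_leading_monomial_not_mult_cocycle2 i j P :
  i != j -> eq2_upto (2 ^ i + 2 ^ j) P (mono2 1 (2 ^ i) (2 ^ j)) -> ~ mult_cocycle2 P.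
Proof.
move=> ij lowP; apply: (@leading_monomial_not_mult_cocycle2 _ _ P
  (additive_exponent_pow2 i) (additive_exponent_pow2 j) lowP).
by rewrite eqn_exp2l.
Qed.

Lemma add_cobound1_pow2D {g : ps1} {i j : nat} :
  (forall k, k != (2 ^ i + 2 ^ j)%N -> g k = 0) -> forall a b,
  add_cobound1 g a b =
    mono2 (g (2 ^ i + 2 ^ j)%N) (2 ^ i) (2 ^ j) a b
    + mono2 (g (2 ^ i + 2 ^ j)%N) (2 ^ j) (2 ^ i) a b.
Proof.
move=> g_d a b; rewrite /add_cobound1 /mono2.
have [ab | ab] := eqVneq (a + b)%N (2 ^ i + 2 ^ j)%N; last first.
  rewrite (g_d _ ab) mulr0 subr0.
  have -> : (if a == 0%N then g b else 0) = 0 by case: eqP => [a0 | //] /=; apply: g_d; lia.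
  have -> : (if b == 0%N then g a else 0) = 0 by case: eqP => [b0 | //] /=; apply: g_d; lia.
  have -> : (a == 2 ^ i)%N && (b == 2 ^ j)%N = false by lia.
  by have -> /= : (a == 2 ^ j)%N && (b == 2 ^ i)%N = false by lia; rewrite addr0.
have ifE (c : bool) (x : 'F_2) : (if c then x else 0) = c%:R * x by rewrite mulr_natl mulrb.
have ifE' (c : bool) (x y : 'F_2) : (c -> x = y) -> (if c then x else 0) = c%:R * y.
  by move=> xy; rewrite -ifE; case: c xy => // ->.
rewrite (ifE' _ _ (g (2 ^ i + 2 ^ j)%N)); last by move/eqP=> a0; congr g; lia.
rewrite (ifE' _ _ (g (2 ^ i + 2 ^ j)%N)); last by move/eqP=> b0; congr g; lia.
rewrite !ifE ab bin_pow2D_F2.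
have -> : (b == 0%N) = (a == 2 ^ i + 2 ^ j)%N by lia.
have -> : (a == 2 ^ i)%N && (b == 2 ^ j)%N = (a == 2 ^ i)%N by lia.
have -> : (a == 2 ^ j)%N && (b == 2 ^ i)%N = (a == 2 ^ j)%N by lia.
apply: (@F2_eq_sub_mul2 _ _ (- ((a == 2 ^ i)%N%:R + (a == 2 ^ j)%N%:R) * g (2 ^ i + 2 ^ j)%N)).
by ring.
Qed.

Theorem mainTheorem6 (i j : nat) (c : 'F_2) :
  i != j -> extends_to_mult_cocycle c i j -> c ^+ 2 = 0.
Proof.
move=> ij [P [cocP [g [g_d lowP]]]].
have [-> | c1] := F2_cases c; first by rewrite expr2 mul0r.
exfalso; subst c.
set e := g (2 ^ i + 2 ^ j)%N.
have lowP' a b : (a + b <= 2 ^ i + 2 ^ j)%N -> P a b =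
    mono2 1 (2 ^ i) (2 ^ j) a b + (mono2 e (2 ^ i) (2 ^ j) a b + mono2 e (2 ^ j) (2 ^ i) a b).
  by move=> deg; rewrite lowP // (add_cobound1_pow2D g_d).
have [e0 | e1] := F2_cases e.
- apply: (@pow2_leading_monomial_not_mult_cocycle2 i j P ij _ cocP) => a b deg.
  by rewrite lowP' // e0 /mono2 !if_same !addr0.
- apply: (@pow2_leading_monomial_not_mult_cocycle2 j i P _ _ cocP); first by rewrite eq_sym.
  move=> a b deg; rewrite lowP'; last by lia.
  by rewrite e1 addrA F2_addrr add0r.
Qed.
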